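(* Let $\mathcal{C}$ be a polarity and $\mathcal{H}\subseteq\mathcal{C}_+$ a refinement of $\mathcal{C}$. Let $x$ be an object of $\mathcal{C}$ that is injective in the polarity $\mathcal{C}$, and let $\eta_x:x\to Ex$ be a completion of $x$ in $\mathcal{C}$ relative to $\mathcal{H}$. Then $\eta_x$ is an isomorphism, and $x$ is complete relative to $\mathcal{H}$.
   Context: A refinement of a category $\mathcal{C}$ is a subcategory containing all objects and all isomorphisms of $\mathcal{C}$. A polarity is a category $\mathcal{C}$ with two refinements $\mathcal{C}_+$ (positive arrows) and $\mathcal{C}_-$ (negative arrows). An object $x$ of a polarity is injective if for every positive arrow $g:a\to b$ and every negative arrow $f:a\to x$ there is an arrow $h:b\to x$ with $hg=f$. An object $z$ of a category is amphi-terminal if every object has at least one arrow to $z$ and $z$ has at most one arrow to any object. For an object $x$, let $x\downarrow_{\mathcal{H}}\mathcal{C}$ be the category whose objects are arrows $f:x\to a$ in $\mathcal{H}$, with morphisms from $f:x\to a$ to $g:x\to b$ the arrows $\xi:a\to b$ of $\mathcal{C}$ with $\xi f=g$. A completion of $x$ relative to $\mathcal{H}$ is an amphi-terminal object of $x\downarrow_{\mathcal{H}}\mathcal{C}$, and $x$ is complete relative to $\mathcal{H}$ if $1_x$ is such a completion. *)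

Record Category := {
  Obj :> Type;
  Hom : Obj -> Obj -> Type;
  idm : forall a, Hom a a;
  comp : forall a b c, Hom b c -> Hom a b -> Hom a c;
  comp_assoc : forall a b c d (h : Hom c d) (g : Hom b c) (f : Hom a b),
      comp a c d h (comp a b c g f) = comp a b d (comp b c d h g) f;
  comp_id_l : forall a b (f : Hom a b), comp a b b (idm b) f = f;
  comp_id_r : forall a b (f : Hom a b), comp a a b f (idm a) = f
}.

Arguments Hom {_} _ _.
Arguments idm {_} _.
Arguments comp {_ _ _ _} _ _.

Definition ArrowClass (C : Category) := forall a b : C, Hom a b -> Prop.

Definition is_iso {C : Category} {a b : C} (f : Hom a b) : Prop :=
  exists g : Hom b a, comp g f = idm a /\ comp f g = idm b.

(* A refinement: a subcategory containing all objects (implicit) and all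
   isomorphisms: closed under identities and composition, contains isos. *)
Definition refinement {C : Category} (P : ArrowClass C) : Prop :=
  (forall a : C, P a a (idm a)) /\
  (forall (a b c : C) (g : Hom b c) (f : Hom a b),
      P b c g -> P a b f -> P a c (comp g f)) /\
  (forall (a b : C) (f : Hom a b), is_iso f -> P a b f).

Definition subclass {C : Category} (P Q : ArrowClass C) : Prop :=
  forall a b (f : Hom a b), P a b f -> Q a b f.

Definition injective_obj {C : Category} (Pos Neg : ArrowClass C) (x : C) : Prop :=
  forall (a b : C) (g : Hom a b) (f : Hom a x),
    Pos a b g -> Neg a x f -> exists h : Hom b x, comp h g = f.

(* Amphi-terminal objects of the comma category x ↓_H C, written out:
   objects are pairs (a, f : x -> a) with f in H; morphisms from (a,f) to
   (b,g) are arrows xi : a -> b of C with xi ∘ f = g. *)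
Definition completion {C : Category} (H : ArrowClass C) (x e : C)
    (eta : Hom x e) : Prop :=
  H x e eta /\
  (* every object has at least one arrow to (e, eta) *)
  (forall (a : C) (f : Hom x a), H x a f ->
      exists xi : Hom a e, comp xi f = eta) /\
  (* (e, eta) has at most one arrow to any object *)
  (forall (b : C) (g : Hom x b), H x b g ->
      forall xi1 xi2 : Hom e b, comp xi1 eta = g -> comp xi2 eta = g -> xi1 = xi2).

Definition complete {C : Category} (H : ArrowClass C) (x : C) : Prop :=
  completion H x x (idm x).


(* Injectivity of x, applied to the positive arrow eta and the negative
   arrow 1_x, yields a retraction r of eta.  Both eta and eta r are arrows
   from (Ex, eta) to itself in the comma category, so amphi-terminality
   forces eta r = 1; thus eta is an isomorphism, and composing with its
   inverse transports the completion property from eta to 1_x. *)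

Section Completions.

Variables (C : Category) (H : ArrowClass C).

Lemma completion_retraction_is_iso (x e : C) (eta : Hom x e) (r : Hom e x) :
  completion H x e eta -> comp r eta = idm x -> is_iso eta.
Proof.
  intros [Heta [_ Huniq]] Hr.
  exists r; split; [exact Hr |].
  apply (Huniq e eta Heta).
  - rewrite <- comp_assoc, Hr. apply comp_id_r.
  - apply comp_id_l.
Qed.

Lemma complete_of_iso_completion (x e : C) (eta : Hom x e) :
  refinement H -> completion H x e eta -> is_iso eta -> complete H x.
Proof.
  intros [Hid _] [_ [Hex _]] [r [Hr _]].
  split; [apply Hid | split].
  - intros a f Hf. destruct (Hex a f Hf) as [xi Hxi].
    exists (comp r xi). rewrite <- comp_assoc, Hxi. exact Hr.
  - intros b g _ xi1 xi2 H1 H2.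
    rewrite comp_id_r in H1, H2. congruence.
Qed.

End Completions.

Lemma injective_obj_retraction (C : Category) (Pos Neg : ArrowClass C)
    (x e : C) (eta : Hom x e) :
  refinement Neg -> injective_obj Pos Neg x -> Pos x e eta ->
  exists r : Hom e x, comp r eta = idm x.
Proof.
  intros [Nid _] hinj Heta.
  exact (hinj x e eta (idm x) Heta (Nid x)).
Qed.

Theorem mainTheorem5 (C : Category) (Pos Neg H : ArrowClass C)
  (hPos : refinement Pos) (hNeg : refinement Neg)
  (hH : refinement H) (hHPos : subclass H Pos)
  (x Ex : C) (eta : Hom x Ex)
  (hinj : injective_obj Pos Neg x)
  (hcomp : completion H x Ex eta) :
  is_iso eta /\ complete H x.
Proof.
  assert (Hiso : is_iso eta).
  { destruct (injective_obj_retraction C Pos Neg x Ex eta hNeg hinj)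
      as [r Hr].
    - apply hHPos, hcomp.
    - exact (completion_retraction_is_iso C H x Ex eta r hcomp Hr). }
  split; [exact Hiso |].
  exact (complete_of_iso_completion C H x Ex eta hH hcomp Hiso).
Qed.
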